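(* Let $I$ be a conditional indicator w.r.t. $\mathcal{H}$ which is increasing and regular, and define for $X\in\mathbb{L}^0(\overline{\mathbb{R}},\mathcal{F})$ $$I^L(X)=\operatorname{ess\,sup}_{\mathcal{H}}\{I(Y):Y\in\mathbb{D}_I,\ Y\le X\},\qquad I^U(X)=\operatorname{ess\,inf}_{\mathcal{H}}\{I(Y):Y\in\mathbb{D}_I,\ Y\ge X\}.$$ Then $I^L$ and $I^U$ are regular.
   Context: Let $(\Omega,\mathcal{F},\mathbb{P})$ be a probability space with $\mathcal{F}$ complete, and $\mathcal{H}\subseteq\mathcal{F}$ a complete sub-$\sigma$-algebra. $\overline{\mathbb{R}}=\mathbb{R}\cup\{\pm\infty\}$ with conventions $r\pm\infty=\pm\infty$, $\infty-\infty=0$, $\infty+\infty=\infty$, $0\times(\pm\infty)=0$; $\mathbb{L}^0(G,\mathcal{G})$ is the set of $\mathcal{G}$-measurable random variables a.s. valued in $G$. For a family $\Gamma$ of random variables, $\operatorname{ess\,sup}_{\mathcal{H}}\Gamma$ is the smallest (a.s.) $\mathcal{H}$-measurable random variable dominating every element of $\Gamma$ a.s., and $\operatorname{ess\,inf}_{\mathcal{H}}\Gamma=-\operatorname{ess\,sup}_{\mathcal{H}}(-\Gamma)$ (with single-variable versions $\operatorname{ess\,sup}_{\mathcal{H}}(X)=\operatorname{ess\,sup}_{\mathcal{H}}\{X\}$). A conditional indicator w.r.t. $\mathcal{H}$ is a map $I:\mathbb{D}_I\to\mathbb{L}^0(\overline{\mathbb{R}},\mathcal{H})$, $0\in\mathbb{D}_I\subseteq\mathbb{L}^0(\overline{\mathbb{R}},\mathcal{F})$,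 with $I(X)\in[\operatorname{ess\,inf}_{\mathcal{H}}(X),\operatorname{ess\,sup}_{\mathcal{H}}(X)]$ a.s. and $\mathbb{D}_I+\mathbb{L}^0(\overline{\mathbb{R}},\mathcal{H})\subseteq\mathbb{D}_I$. Increasing: $X\le Y\Rightarrow I(X)\le I(Y)$. A set is $\mathcal{H}$-decomposable if $X1_H+Y1_{\Omega\setminus H}$ belongs to it whenever $X,Y$ do and $H\in\mathcal{H}$. A map $J$ defined on a domain $\mathbb{D}_J$ is regular if $\mathbb{D}_J$ is $\mathcal{H}$-decomposable and for $X,Y\in\mathbb{D}_J$, $H\in\mathcal{H}$, $X1_H=Y1_H$ implies $J(X)1_H=J(Y)1_H$. *)

From HB Require Import structures.
From mathcomp Require Import all_boot all_order all_algebra.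
From mathcomp Require Import all_classical all_reals all_analysis measurable_realfun.
Set Implicit Arguments. Unset Strict Implicit. Unset Printing Implicit Defensive.
Import Order.TTheory GRing.Theory Num.Theory.
Local Open Scope classical_set_scope.
Local Open Scope ring_scope.
Local Open Scope ereal_scope.

Section Defs.
Context d (Omega : measurableType d) (R : realType) (P : probability Omega R).

(* The probability space (Omega, F, P): F = the measurable sets of Omega. *)
Definition F_complete : Prop :=
  forall N A : set Omega, measurable N -> P N = 0 -> A `<=` N -> measurable A.

Definition complete_sub_sigma (H : set (set Omega)) : Prop :=
  [/\ sigma_algebra setT H, (forall A, H A -> measurable A)
    & (forall N, measurable N -> P N = 0 -> H N)].

Definition Gmeas (G : set (set Omega)) (X : Omega -> \bar R) : Prop :=
  forall B : set (\bar R), measurable B -> G (X @^-1` B).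

Definition L0F (X : Omega -> \bar R) : Prop := measurable_fun setT X.

Definition eadd0 (x y : \bar R) : \bar R :=
  match x, y with
  | +oo, -oo => 0
  | -oo, +oo => 0
  | _, _ => x + y
  end.

(* X 1_A, with 0 * (+-oo) = 0. *)
Definition restr (A : set Omega) (X : Omega -> \bar R) : Omega -> \bar R :=
  fun w => if pselect (A w) then X w else 0.

Definition glue (A : set Omega) (X Y : Omega -> \bar R) : Omega -> \bar R :=
  fun w => eadd0 (restr A X w) (restr (~` A) Y w).

Definition is_ess_sup (H : set (set Omega)) (Gam : set (Omega -> \bar R))
    (S : Omega -> \bar R) : Prop :=
  [/\ Gmeas H S,
      (forall X, Gam X -> {ae P, forall w, X w <= S w}) &
      (forall S', Gmeas H S' -> (forall X, Gam X -> {ae P, forall w, X w <= S' w}) ->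
         {ae P, forall w, S w <= S' w})].

Definition ess_sup (H : set (set Omega)) (Gam : set (Omega -> \bar R)) :
    Omega -> \bar R :=
  match pselect (exists S, is_ess_sup H Gam S) with
  | left e => projT1 (cid e)
  | right _ => fun _ => 0
  end.

Definition ess_inf (H : set (set Omega)) (Gam : set (Omega -> \bar R)) :
    Omega -> \bar R :=
  fun w => - ess_sup H [set fun v => - X v | X in Gam] w.

Definition cond_indicator (H : set (set Omega)) (D : set (Omega -> \bar R))
    (I : (Omega -> \bar R) -> (Omega -> \bar R)) : Prop :=
  [/\ D (fun _ => 0),
      (forall X, D X -> L0F X),
      (forall X, D X -> Gmeas H (I X)),
      (forall X, D X -> {ae P, forall w,
          ess_inf H [set X] w <= I X w /\ I X w <= ess_sup H [set X] w}) &
      (forall X Z, D X -> Gmeas H Z -> D (fun w => eadd0 (X w) (Z w)))].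

Definition increasing (D : set (Omega -> \bar R))
    (I : (Omega -> \bar R) -> (Omega -> \bar R)) : Prop :=
  forall X Y, D X -> D Y -> {ae P, forall w, X w <= Y w} ->
    {ae P, forall w, I X w <= I Y w}.

Definition decomposable (H : set (set Omega)) (D : set (Omega -> \bar R)) : Prop :=
  forall X Y A, D X -> D Y -> H A -> D (glue A X Y).

Definition regular (H : set (set Omega)) (D : set (Omega -> \bar R))
    (J : (Omega -> \bar R) -> (Omega -> \bar R)) : Prop :=
  decomposable H D /\
  forall X Y A, D X -> D Y -> H A ->
    {ae P, forall w, restr A X w = restr A Y w} ->
    {ae P, forall w, restr A (J X) w = restr A (J Y) w}.

Definition IL (H : set (set Omega)) (D : set (Omega -> \bar R))
    (I : (Omega -> \bar R) -> (Omega -> \bar R)) (X : Omega -> \bar R) :=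
  ess_sup H [set I Y | Y in [set Y | D Y /\ {ae P, forall w, Y w <= X w}]].

Definition IU (H : set (set Omega)) (D : set (Omega -> \bar R))
    (I : (Omega -> \bar R) -> (Omega -> \bar R)) (X : Omega -> \bar R) :=
  ess_inf H [set I Y | Y in [set Y | D Y /\ {ae P, forall w, X w <= Y w}]].

End Defs.

From Pilot Require Import Defs.
From HB Require Import structures.
From mathcomp Require Import all_boot all_order all_algebra.
From mathcomp Require Import all_classical all_reals all_analysis measurable_realfun.
From mathcomp Require Import lra.
Set Implicit Arguments. Unset Strict Implicit. Unset Printing Implicit Defensive.
Import Order.TTheory GRing.Theory Num.Theory.
Local Open Scope classical_set_scope.
Local Open Scope ring_scope.
Local Open Scope ereal_scope.

Local Notation glue := Defs.glue.

(* Regularity of I^L is a locality statement. If X = Y on A in H and Z in D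
   lies below X, then Z 1_A - oo 1_(Omega \ A) lies in D (D is decomposable
   and contains the constants), lies below Y, and by regularity of I has the
   same I-value as Z on A. Hence the families defining I^L(X) and I^L(Y)
   agree on A, and so do their conditional essential suprema; I^U is dual.
   The real work is the existence of conditional essential suprema: among
   the countable subfamilies (Z_n) maximise E[psi(sup_n Z_n)] for a bounded
   strictly increasing psi; the supremum of a maximiser dominates the whole
   family, since adding one more member cannot increase that expectation. *)

Lemma measurable_contract (R : realType) :
  measurable_fun [set: \bar R] (@contract R).
Proof.
move=> _ Y mY; rewrite setTI.
have mYfin : measurable ((fun r : R => contract r%:E) @^-1` Y).
  have c_nd : {homo (fun r : R => contract r%:E) : x y / (x <= y)%R}.
    by move=> x y xy; rewrite le_contract lee_fin.
  by have := nondecreasing_measurable measurableT c_nd measurableT mY; rewrite setTI.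
have mYpt (x : \bar R) : measurable ([set x] `&` (@contract R @^-1` Y)).
  have [Yx|Yx] := pselect (Y (contract x)).
    rewrite (_ : _ `&` _ = [set x]); first exact: emeasurable_set1.
    by apply/seteqP; split => [z [->]//|z ->].
  by rewrite (_ : _ `&` _ = set0) //; apply/seteqP; split => [z [-> ]//|z].
rewrite (_ : _ @^-1` Y = (EFin @` ((fun r : R => contract r%:E) @^-1` Y)) `|`
   (([set +oo] `&` (@contract R @^-1` Y)) `|` ([set -oo] `&` (@contract R @^-1` Y)))).
  by apply: measurableU; [exact: measurable_image_EFin|apply: measurableU].
apply/seteqP; split.
  by case=> [r|//|//] Yr; [left; exists r|right; left|right; right].
by move=> z [[r Yr <-]//|[[-> ]|[-> ]]].
Qed.

Lemma measurable_fun_pselect d d' (T : measurableType d) (U : measurableType d')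
    (A : set T) (f g : T -> U) :
  measurable A -> measurable_fun [set: T] f -> measurable_fun [set: T] g ->
  measurable_fun [set: T] (fun w => if pselect (A w) then f w else g w).
Proof.
move=> mA mf mg _ B mB; rewrite setTI.
rewrite (_ : _ @^-1` B = (A `&` (f @^-1` B)) `|` (~` A `&` (g @^-1` B))).
  apply: measurableU; apply: measurableI => //.
  - by have := mf measurableT B mB; rewrite setTI.
  - exact: measurableC.
  - by have := mg measurableT B mB; rewrite setTI.
apply/seteqP; split => w /=.
  by case: pselect => Aw Bw; [left|right].
by case=> -[Aw Bw]; case: pselect.
Qed.

Definition merge_seq (T : Type) (u : nat -> nat -> T) (n : nat) : T :=
  if (unpickle n : option (nat * nat)) is Some (k, m) then u k m else u 0%N 0%N.

Lemma merge_seqK (T : Type) (u : nat -> nat -> T) k m :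
  merge_seq u (pickle (k, m)) = u k m.
Proof. by rewrite /merge_seq pickleK. Qed.

Lemma merge_seq_in (T : Type) (G : set T) (u : nat -> nat -> T) :
  (forall k m, G (u k m)) -> forall n, G (merge_seq u n).
Proof. by move=> Gu n; rewrite /merge_seq; case: (unpickle n) => [[]|]. Qed.

Section gluing.
Context d (Omega : measurableType d) (R : realType).
Implicit Types (X Y : Omega -> \bar R) (A : set Omega).

Lemma eadd0x0 (x : \bar R) : eadd0 x 0 = x.
Proof. by case: x => [r| |] //=; rewrite adde0. Qed.

Lemma eadd00x (x : \bar R) : eadd0 0 x = x.
Proof. by case: x => [r| |] //=; rewrite add0e. Qed.

Lemma glueE A X Y w : glue A X Y w = if pselect (A w) then X w else Y w.
Proof.
rewrite /glue /restr; case: pselect => Aw; case: pselect => nAw; cbv iota.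
- by case: nAw.
- by rewrite eadd0x0.
- by rewrite eadd00x.
- by case: nAw.
Qed.

Lemma glue_ninfty_le (mu : {measure set Omega -> \bar R}) A X Y Z :
  {ae mu, forall w, Z w <= X w} -> {ae mu, forall w, restr A X w = restr A Y w} ->
  {ae mu, forall w, glue A Z (fun _ => -oo) w <= Y w}.
Proof.
apply: filterS2 => w ZXw XYw; rewrite glueE; case: pselect => Aw; last exact: leNye.
by move: XYw; rewrite /restr; case: pselect => // _ /= <-.
Qed.

Lemma glue_pinfty_ge (mu : {measure set Omega -> \bar R}) A X Y Z :
  {ae mu, forall w, X w <= Z w} -> {ae mu, forall w, restr A X w = restr A Y w} ->
  {ae mu, forall w, Y w <= glue A Z (fun _ => +oo) w}.
Proof.
apply: filterS2 => w XZw XYw; rewrite glueE; case: pselect => Aw; last exact: leey.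
by move: XYw; rewrite /restr; case: pselect => // _ /= <-.
Qed.

End gluing.

Section conditional_ess_sup.
Context d (Omega : measurableType d) (R : realType) (P : probability Omega R)
  (H : set (set Omega)).
Hypothesis hH : complete_sub_sigma P H.
Implicit Types (X Y Z : Omega -> \bar R) (A : set Omega).

Local Notation OmegaH := (g_sigma_algebraType H).

Lemma measurable_OmegaH (A : set OmegaH) : measurable A <-> H A.
Proof. by case: hH => sH _ _; rewrite /measurable /= sigma_algebra_id. Qed.

Lemma GmeasP X : Gmeas H X <-> measurable_fun [set: OmegaH] (X : OmegaH -> \bar R).
Proof.
split => [hX _ B mB|hX B mB]; first by rewrite setTI; apply/measurable_OmegaH/hX.
by apply/measurable_OmegaH; have := hX measurableT B mB; rewrite setTI.
Qed.

Lemma Gmeas_L0F X : Gmeas H X -> L0F X.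
Proof. by case: hH => _ HF _ hX _ B mB; rewrite setTI; exact/HF/hX. Qed.

Lemma Gmeas_cst (c : \bar R) : Gmeas H (fun _ => c).
Proof. exact/GmeasP/measurable_cst. Qed.

Lemma GmeasN X : Gmeas H X -> Gmeas H (fun w => - X w).
Proof. by move=> /GmeasP mX; apply/GmeasP; exact: measurableT_comp mX. Qed.

Lemma Gmeas_pselect A X Y : H A -> Gmeas H X -> Gmeas H Y ->
  Gmeas H (fun w => if pselect (A w) then X w else Y w).
Proof.
move=> hA /GmeasP mX /GmeasP mY; apply/GmeasP.
have mA : measurable (A : set OmegaH) by exact/measurable_OmegaH.
exact: measurable_fun_pselect mA mX mY.
Qed.

Lemma L0F_decomposable : decomposable H (@L0F d Omega R).
Proof.
case: hH => _ HF _ X Y A mX mY hA.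
have -> : glue A X Y = (fun w => if pselect (A w) then X w else Y w).
  by apply/funext => w; exact: glueE.
exact: measurable_fun_pselect (HF _ hA) mX mY.
Qed.

Definition supn (f : nat -> Omega -> \bar R) (w : Omega) : \bar R :=
  esups (fun n => f n w) 0%N.

Lemma supn_ub f k w : f k w <= supn f w.
Proof. by apply: ereal_sup_ubound; exists k. Qed.

Lemma supn_le f w b : (forall k, f k w <= b) -> supn f w <= b.
Proof. by move=> fb; apply: ge_ereal_sup => _ [k _ <-]. Qed.

Lemma Gmeas_supn f : (forall n, Gmeas H (f n)) -> Gmeas H (supn f).
Proof.
move=> hf; apply/GmeasP.
have mf n : measurable_fun [set: OmegaH] (f n) by exact/GmeasP.
exact: (@measurable_fun_esups _ OmegaH R setT f mf 0%N).
Qed.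

Let psi (x : \bar R) : \bar R := (contract x + 1)%:E.

Let measurable_psi : measurable_fun [set: \bar R] psi.
Proof.
by apply/measurable_EFinP; apply: measurable_funD => //; exact: measurable_contract.
Qed.

Let psi_ge0 x : 0 <= psi x.
Proof. by rewrite /psi lee_fin; have /ler_normlP[? _] := contract_le1 x; lra. Qed.

Let psi_le2 x : psi x <= 2%:E.
Proof. by rewrite /psi lee_fin; have /ler_normlP[_ ?] := contract_le1 x; lra. Qed.

Let psi_le x y : x <= y -> psi x <= psi y.
Proof. by move=> xy; rewrite /psi lee_fin lerD2r le_contract. Qed.

Definition Epsi_sup (f : nat -> Omega -> \bar R) : \bar R :=
  \int[P]_w psi (supn f w).

Let measurable_psi_supn f : (forall n, Gmeas H (f n)) ->
  measurable_fun [set: Omega] (fun w => psi (supn f w)).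
Proof.
move=> hf; apply: (measurableT_comp measurable_psi).
by apply: Gmeas_L0F; exact: Gmeas_supn.
Qed.

Lemma Epsi_sup_ge0 f : 0 <= Epsi_sup f.
Proof. by apply: integral_ge0 => w _; exact: psi_ge0. Qed.

Lemma Epsi_sup_le2 f : (forall n, Gmeas H (f n)) -> Epsi_sup f <= 2%:E.
Proof.
move=> hf; apply: (@le_trans _ _ (\int[P]_(w in setT) (cst 2%:E) w)).
  by apply: ge0_le_integral => //; exact: measurable_psi_supn.
rewrite integral_cst //; set P1 := (X in _ * X).
have -> : P1 = 1 by exact: probability_setT.
by rewrite mule1.
Qed.

Lemma Epsi_sup_fin_num f : (forall n, Gmeas H (f n)) -> Epsi_sup f \is a fin_num.
Proof.
move=> hf; rewrite ge0_fin_numE ?Epsi_sup_ge0 //.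
by rewrite (le_lt_trans (Epsi_sup_le2 hf)) // ltey.
Qed.

Lemma le_Epsi_sup f g : (forall n, Gmeas H (f n)) -> (forall n, Gmeas H (g n)) ->
  (forall w, supn f w <= supn g w) -> Epsi_sup f <= Epsi_sup g.
Proof.
move=> hf hg fg; apply: ge0_le_integral => //.
- exact: measurable_psi_supn.
- exact: measurable_psi_supn.
- by move=> w _; exact: psi_le.
Qed.

(* Strict monotonicity of psi turns the equality of the expectations into an
   almost sure equality. *)
Lemma Epsi_sup_ae_eq f g : (forall n, Gmeas H (f n)) -> (forall n, Gmeas H (g n)) ->
  (forall w, supn f w <= supn g w) -> Epsi_sup g <= Epsi_sup f ->
  {ae P, forall w, supn f w = supn g w}.
Proof.
move=> hf hg fg gf.
pose h w := (contract (supn g w) - contract (supn f w))%:E.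
have h_ge0 w : 0 <= h w by rewrite /h lee_fin subr_ge0 le_contract.
have mcontract k : (forall n, Gmeas H (k n)) ->
    measurable_fun [set: Omega] (fun w => contract (supn k w)).
  move=> hk; apply: (measurableT_comp (@measurable_contract R)).
  by apply: Gmeas_L0F; exact: Gmeas_supn.
have mh : measurable_fun [set: Omega] h.
  by apply/measurable_EFinP; apply: measurable_funB; exact: mcontract.
have Eg : Epsi_sup g = Epsi_sup f + \int[P]_w h w.
  have := ge0_integralD P measurableT (f1 := fun w => psi (supn f w)) (f2 := h)
    (fun w _ => psi_ge0 _) (measurable_psi_supn hf) (fun w _ => h_ge0 w) mh.
  rewrite /Epsi_sup => <-.
  by apply: eq_integral => w _; rewrite /psi /h -EFinD; congr EFin; lra.
have Eh0 : \int[P]_w h w = 0.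
  apply/eqP; rewrite eq_le integral_ge0 ?andbT; last by move=> w _; exact: h_ge0.
  by move: gf; rewrite Eg -[leRHS]adde0 leeD2lE //; exact: Epsi_sup_fin_num.
have : \int[P]_(w in setT) `|h w| = 0.
  by rewrite -Eh0; apply: eq_integral => w _; rewrite gee0_abs.
move/(ae_eq_integral_abs P measurableT mh); apply: filterS => w /(_ I).
by rewrite /h => /eqP; rewrite eqe subr_eq0 => /eqP /contract_inj ->.
Qed.

Lemma exists_Epsi_sup_max (G : set (Omega -> \bar R)) Z0 :
  (forall X, G X -> Gmeas H X) -> G Z0 ->
  exists2 F, (forall n, G (F n)) &
    forall f, (forall n, G (f n)) -> Epsi_sup f <= Epsi_sup F.
Proof.
move=> hG GZ0.
have hGf (f : nat -> Omega -> \bar R) :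
    (forall n, G (f n)) -> forall n, Gmeas H (f n) by move=> Gf n; exact/hG.
pose Vs := [set Epsi_sup f | f in [set f | forall n, G (f n)]].
pose s := ereal_sup Vs.
have s_ub f : (forall n, G (f n)) -> Epsi_sup f <= s.
  by move=> Gf; apply: ereal_sup_ubound; exists f.
have s_ge0 : 0 <= s.
  exact: le_trans (Epsi_sup_ge0 (fun _ => Z0)) (s_ub _ (fun _ => GZ0)).
have s_le2 : s <= 2%:E.
  by apply: ge_ereal_sup => _ [f Gf <-]; apply: Epsi_sup_le2; exact: hGf.
have s_fin : s \is a fin_num by rewrite ge0_fin_numE // (le_lt_trans s_le2) // ltey.
have near_s k : exists f : nat -> Omega -> \bar R,
    (forall n, G (f n)) /\ s - (k.+1%:R^-1)%:E < Epsi_sup f.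
  have [_ [f Gf <-] ?] := ub_ereal_sup_adherent (S := Vs) (e := (k.+1%:R^-1)%R)
    ltac:(by rewrite invr_gt0) s_fin.
  by exists f.
have [u Gu_su] := choice near_s.
have GF := merge_seq_in (fun k => (Gu_su k).1).
exists (merge_seq u) => // f Gf; apply: le_trans (s_ub f Gf) _.
apply/lee_subgt0Pr => e e0.
have [k _ kP] := near_infty_natSinv_lt (PosNum e0).
have ke : (k.+1%:R^-1 < e)%R by apply: kP => /=.
have Guk := hGf _ (Gu_su k).1.
apply: (le_trans _ (@le_Epsi_sup (u k) (merge_seq u) Guk (hGf _ GF) _)).
  apply: (le_trans _ (ltW (Gu_su k).2)).
  by apply: leeB => //; rewrite lee_fin ltW.
by move=> w; apply: supn_le => m; rewrite -(merge_seqK u); exact: supn_ub.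
Qed.

Lemma exists_ess_sup (G : set (Omega -> \bar R)) :
  (forall X, G X -> Gmeas H X) -> exists S, is_ess_sup P H G S.
Proof.
move=> hG; have [[Z0 GZ0]|G0] := pselect (exists Z, G Z); last first.
  exists (fun _ => -oo); split; first exact: Gmeas_cst.
  - by move=> X GX; case: G0; exists X.
  - by move=> S' _ _; apply: aeW => w; exact: leNye.
have hGf (f : nat -> Omega -> \bar R) :
    (forall n, G (f n)) -> forall n, Gmeas H (f n) by move=> Gf n; exact/hG.
have [F GF Fmax] := exists_Epsi_sup_max hG GZ0.
exists (supn F); split; first exact: Gmeas_supn (hGf _ GF).
- move=> Z GZ; pose FZ n := if n is n'.+1 then F n' else Z.
  have GFZ n : G (FZ n) by case: n.
  have FFZ w : supn F w <= supn FZ w by apply: supn_le => k; exact: (supn_ub FZ k.+1).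
  have := Epsi_sup_ae_eq (hGf _ GF) (hGf _ GFZ) FFZ (Fmax _ GFZ).
  by apply: filterS => w ->; exact: (supn_ub FZ 0).
- move=> S' _ ubS'; have := ae_foralln (fun n => ubS' (F n) (GF n)).
  by apply: filterS => w FS'; exact: supn_le.
Qed.

Lemma ess_supP (G : set (Omega -> \bar R)) :
  (forall X, G X -> Gmeas H X) -> is_ess_sup P H G (ess_sup P H G).
Proof.
move=> hG; rewrite /ess_sup; case: pselect => [e|]; first exact: (projT2 (cid e)).
by move=> nS; case: nS; exact: exists_ess_sup.
Qed.

Lemma ess_sup_le_on (G1 G2 : set (Omega -> \bar R)) A :
  H A -> (forall X, G1 X -> Gmeas H X) -> (forall X, G2 X -> Gmeas H X) ->
  (forall Z, G1 Z -> exists2 Z', G2 Z' & {ae P, forall w, A w -> Z w = Z' w}) ->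
  {ae P, forall w, A w -> ess_sup P H G1 w <= ess_sup P H G2 w}.
Proof.
move=> hA hG1 hG2 G12.
have [_ _ min1] := ess_supP hG1; have [m2 ub2 _] := ess_supP hG2.
pose S w := if pselect (A w) then ess_sup P H G2 w else +oo.
have ubS X : G1 X -> {ae P, forall w, X w <= S w}.
  move=> G1X; have [Z' G2Z' XZ'] := G12 X G1X.
  move: XZ' (ub2 Z' G2Z'); apply: filterS2 => w XZ'w Z'w.
  by rewrite /S; case: pselect => Aw; [rewrite XZ'w|rewrite leey].
have := min1 S (Gmeas_pselect hA m2 (Gmeas_cst _)) ubS.
by apply: filterS => w + Aw; rewrite /S; case: pselect.
Qed.

Lemma ess_sup_restr_eq (G1 G2 : set (Omega -> \bar R)) A :
  H A -> (forall X, G1 X -> Gmeas H X) -> (forall X, G2 X -> Gmeas H X) ->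
  (forall Z, G1 Z -> exists2 Z', G2 Z' & {ae P, forall w, A w -> Z w = Z' w}) ->
  (forall Z, G2 Z -> exists2 Z', G1 Z' & {ae P, forall w, A w -> Z w = Z' w}) ->
  {ae P, forall w, restr A (ess_sup P H G1) w = restr A (ess_sup P H G2) w}.
Proof.
move=> hA hG1 hG2 G12 G21.
have := ess_sup_le_on hA hG1 hG2 G12; have := ess_sup_le_on hA hG2 hG1 G21.
apply: filterS2 => w le21 le12; rewrite /restr; case: pselect => // Aw.
by apply/eqP; rewrite eq_le le12 // le21.
Qed.

Section regular_envelopes.
Variables (D : set (Omega -> \bar R)) (I : (Omega -> \bar R) -> Omega -> \bar R).
Hypotheses (ciI : cond_indicator P H D I) (regI : regular P H D I).

Let Gmeas_I Z : D Z -> Gmeas H (I Z).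
Proof. by case: ciI => _ _ + _ _; apply. Qed.

Lemma regular_glue_cst (c : \bar R) A Z : H A -> D Z ->
  D (glue A Z (fun _ => c)) /\
  {ae P, forall w, A w -> I Z w = I (glue A Z (fun _ => c)) w}.
Proof.
case: ciI regI => D0 _ _ _ Dadd [decD locI] hA DZ.
have Dc : D (fun _ => c).
  have := Dadd _ _ D0 (Gmeas_cst c).
  by congr D; apply/funext => w; rewrite eadd00x.
have DZc := decD _ _ _ DZ Dc hA; split => //.
have ZZc w : restr A Z w = restr A (glue A Z (fun _ => c)) w.
  by rewrite /restr glueE; case: pselect.
have := locI _ _ _ DZ DZc hA (aeW _ ZZc).
by apply: filterS => w + Aw; rewrite /restr; case: pselect.
Qed.

Lemma IL_regular : regular P H (@L0F d Omega R) (IL P H D I).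
Proof.
split; first exact: L0F_decomposable.
pose C X := [set Y | D Y /\ {ae P, forall w, Y w <= X w}].
have glue_below X Y A : H A -> {ae P, forall w, restr A X w = restr A Y w} ->
    forall Z, (I @` C X) Z ->
    exists2 Z', (I @` C Y) Z' & {ae P, forall w, A w -> Z w = Z' w}.
  move=> hA XY _ [Z [DZ ZX] <-].
  have [DZ' IZ'] := regular_glue_cst (-oo) hA DZ.
  exists (I (glue A Z (fun _ => -oo))) => //; exists (glue A Z (fun _ => -oo)) => //.
  by split => //; exact: glue_ninfty_le ZX XY.
move=> X Y A _ _ hA XY; apply: ess_sup_restr_eq => //.
- by move=> _ [Z [DZ _] <-]; exact: Gmeas_I.
- by move=> _ [Z [DZ _] <-]; exact: Gmeas_I.
- exact: glue_below.
- by apply: glue_below => //; apply: filterS XY.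
Qed.

Lemma IU_regular : regular P H (@L0F d Omega R) (IU P H D I).
Proof.
split; first exact: L0F_decomposable.
pose C X := [set Y | D Y /\ {ae P, forall w, X w <= Y w}].
pose NI X := [set fun v => - Z v | Z in I @` C X].
have glue_above X Y A : H A -> {ae P, forall w, restr A X w = restr A Y w} ->
    forall Z, NI X Z -> exists2 Z', NI Y Z' & {ae P, forall w, A w -> Z w = Z' w}.
  move=> hA XY _ [_ [Z [DZ XZ] <-] <-].
  have [DZ' IZ'] := regular_glue_cst (+oo) hA DZ.
  exists (fun v => - I (glue A Z (fun _ => +oo)) v).
    exists (I (glue A Z (fun _ => +oo))) => //; exists (glue A Z (fun _ => +oo)) => //.
    by split => //; exact: glue_pinfty_ge XZ XY.
  by move: IZ'; apply: filterS => w IZw Aw; rewrite IZw.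
move=> X Y A _ _ hA XY.
have : {ae P, forall w,
    restr A (ess_sup P H (NI X)) w = restr A (ess_sup P H (NI Y)) w}.
  apply: ess_sup_restr_eq => //.
  - by move=> _ [_ [Z [DZ _] <-] <-]; exact/GmeasN/Gmeas_I.
  - by move=> _ [_ [Z [DZ _] <-] <-]; exact/GmeasN/Gmeas_I.
  - exact: glue_above.
  - by apply: glue_above => //; apply: filterS XY.
by apply: filterS => w; rewrite /restr /IU /ess_inf; case: pselect => // _ /= ->.
Qed.

End regular_envelopes.

End conditional_ess_sup.

Theorem mainTheorem8 (d : measure_display) (Omega : measurableType d) (R : realType)
    (P : probability Omega R) (H : set (set Omega))
    (D : set (Omega -> \bar R)) (I : (Omega -> \bar R) -> (Omega -> \bar R)) :
  F_complete P -> complete_sub_sigma P H ->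
  cond_indicator P H D I -> increasing P D I -> regular P H D I ->
  regular P H (@L0F d Omega R) (IL P H D I) /\
  regular P H (@L0F d Omega R) (IU P H D I).
Proof.
move=> _ hH ciI _ regI; split; [exact: IL_regular|exact: IU_regular].
Qed.
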